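(* For every $(s_1,s_2,s_3)\in\mathbb{C}^3$ and $Z\in\mathcal{H}_3$, \[ p_{s_1,s_2,s_3}(-Z^{-1})=e^{(s_1+2s_2+3s_3)\pi i}\,p_{s_2,s_1,-s_1-s_2-s_3}(WZW),\qquad W=\begin{pmatrix}0&0&1\\0&1&0\\1&0&0\end{pmatrix}. \]
   Context: $\mathcal{H}_n$ is the Siegel upper half space of degree $n$ and $\mathcal{P}_n$ the cone of real symmetric positive definite $n\times n$ matrices. Let $h_n:\mathcal{H}_n\to\mathbb{C}$ be the unique holomorphic function with $e^{h_n(Z)}=\det Z$ and $h_n(iY)=\frac{\pi i n}{2}+\log\det Y$ for $Y\in\mathcal{P}_n$. For $Z\in\mathcal{H}_3$ with upper left $j\times j$ block $Z_j$, $p_{s,w,u}(Z)=e^{s h_1(Z_1)}e^{w h_2(Z_2)}e^{u h_3(Z)}$. *)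

From HB Require Import structures.
From mathcomp Require Import all_boot all_order all_algebra.
From mathcomp Require Import all_classical all_reals.
From mathcomp Require Import all_analysis.
From mathcomp Require Import complex.
Set Implicit Arguments. Unset Strict Implicit. Unset Printing Implicit Defensive.
Import Order.TTheory GRing.Theory Num.Theory.
Local Open Scope ring_scope.
Local Open Scope complex_scope.

Section Defs.
Variable R : realType.
Local Notation C := R[i].

Definition cexp (z : C) : C :=
  (expR (complex.Re z))%:C * (cos (complex.Im z) +i* sin (complex.Im z)).

Definition Remx n (Z : 'M[C]_n) : 'M[R]_n := map_mx (@complex.Re R) Z.
Definition Immx n (Z : 'M[C]_n) : 'M[R]_n := map_mx (@complex.Im R) Z.

Definition posdef n (Y : 'M[R]_n) : Prop :=
  Y^T = Y /\ forall v : 'cV[R]_n, v != 0 -> 0 < (v^T *m Y *m v) 0 0.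

Definition siegel n (Z : 'M[C]_n) : Prop := Z^T = Z /\ posdef (Immx Z).

Definition iY n (Y : 'M[R]_n) : 'M[C]_n := map_mx (fun y => 0 +i* y) Y.

Definition symE n (k l : 'I_n) : 'M[C]_n :=
  \matrix_(a, b) (if ((a == k) && (b == l)) || ((a == l) && (b == k)) then 1 else 0).

Definition cderivable0 (f : C -> C) : Prop :=
  exists L : C, forall eps : R, 0 < eps -> exists2 del : R, 0 < del &
    forall w : C, w != 0 -> `|w| < (del%:C) ->
      `|(f w - f 0) / w - L| < eps%:C.

(* Holomorphy on H_n, in the symmetric coordinates (z_{kl})_{k <= l}
   (separate holomorphy; equivalent to joint holomorphy by Hartogs). *)
Definition holo_siegel n (h : 'M[C]_n -> C) : Prop :=
  forall Z, siegel Z -> forall k l : 'I_n,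
    cderivable0 (fun w => h (Z + w *: symE k l)).

Definition is_hn n (h : 'M[C]_n -> C) : Prop :=
  [/\ holo_siegel h,
      forall Z, siegel Z -> cexp (h Z) = \det Z &
      forall Y : 'M[R]_n, posdef Y ->
        h (iY Y) = (0 +i* (pi * n%:R / 2)) + (ln (\det Y))%:C ].

Definition ulblock j n (hjn : (j <= n)%N) (Z : 'M[C]_n) : 'M[C]_j :=
  \matrix_(a, b) Z (widen_ord hjn a) (widen_ord hjn b).

Definition pfun (h1 : 'M[C]_1 -> C) (h2 : 'M[C]_2 -> C) (h3 : 'M[C]_3 -> C)
  (s w u : C) (Z : 'M[C]_3) : C :=
  cexp (s * h1 (ulblock (isT : (1 <= 3)%N) Z)) *
  cexp (w * h2 (ulblock (isT : (2 <= 3)%N) Z)) *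
  cexp (u * h3 Z).

Definition Wmx : 'M[C]_3 :=
  \matrix_(a, b) (if (a + b == 2)%N then 1 else 0).

End Defs.

(* Let M_j be the upper left j x j block of M and call det M_j / det M_(j-1) the
   pivots of M; for M in H_n they lie in the upper half plane, since Im (v^* M v) > 0
   for v <> 0. On H_n,
     h_n(M) = h_(n-1)(M_(n-1)) + h_1(det M / det M_(n-1)):
   the difference takes values in 2 pi i Z, is continuous along every real
   coordinate line and vanishes at iY, so moving the real parts of the entries in
   one at a time from i Im M to M shows that it vanishes. Hence p_(s,w,u)(M) is the
   exponential of a linear combination of h_1 at the three pivots of M. By Cramer's
   rule the pivots of -Z^-1 are -1/b_3, -1/b_2, -1/b_1, where b_1, b_2, b_3 are the
   pivots of WZW, and h_1(-1/z) = pi i - h_1(z) on the upper half plane by the same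
   continuity argument; collecting terms gives the factor e^((s1 + 2 s2 + 3 s3) pi i). *)

From HB Require Import structures.
From mathcomp Require Import all_boot all_order all_algebra.
From mathcomp Require Import all_classical all_reals.
From mathcomp Require Import all_analysis.
From mathcomp Require Import complex.
From mathcomp Require Import ring lra.
Import Order.TTheory GRing.Theory Num.Theory.
Import numFieldTopology.Exports numFieldNormedType.Exports.
Local Open Scope ring_scope.
Local Open Scope complex_scope.
Set Implicit Arguments. Unset Strict Implicit. Unset Printing Implicit Defensive.

Section TransformationLaw.
Variable R : realType.
Local Notation C := R[i].
Local Notation Re := (@complex.Re R).
Local Notation Im := (@complex.Im R).
Implicit Types (x y : C) (t : R) (f g : R -> C).
Local Open Scope classical_set_scope.

(** * Complex numbers *)

Lemma complex_ext x y : Re x = Re y -> Im x = Im y -> x = y.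
Proof. by case: x y => a b [c d] /= -> ->. Qed.

Lemma ReD x y : Re (x + y) = Re x + Re y. Proof. by case: x y => a b [c d]. Qed.
Lemma ImD x y : Im (x + y) = Im x + Im y. Proof. by case: x y => a b [c d]. Qed.
Lemma ReN x : Re (- x) = - Re x. Proof. by case: x. Qed.
Lemma ImN x : Im (- x) = - Im x. Proof. by case: x. Qed.
Lemma ReM x y : Re (x * y) = Re x * Re y - Im x * Im y.
Proof. by case: x y => a b [c d]. Qed.
Lemma ImM x y : Im (x * y) = Re x * Im y + Im x * Re y.
Proof. by case: x y => a b [c d]. Qed.
Lemma ReV x : Re x^-1 = Re x / (Re x ^+ 2 + Im x ^+ 2). Proof. by case: x. Qed.
Lemma ImV x : Im x^-1 = - (Im x / (Re x ^+ 2 + Im x ^+ 2)). Proof. by case: x. Qed.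
Lemma ReJ x : Re x^* = Re x. Proof. by case: x. Qed.
Lemma ImJ x : Im x^* = - Im x. Proof. by case: x. Qed.
Lemma Re_real (a : R) : Re a%:C = a. Proof. by []. Qed.
Lemma Im_real (a : R) : Im a%:C = 0. Proof. by []. Qed.
Lemma Re_cplx (a b : R) : Re (a +i* b) = a. Proof. by []. Qed.
Lemma Im_cplx (a b : R) : Im (a +i* b) = b. Proof. by []. Qed.

Definition ReImE := (Re_cplx, Im_cplx, ReD, ImD, ReN, ImN, ReM, ImM, ReJ, ImJ,
  Re_real, Im_real).

Lemma Im_sum (I : Type) (r : seq I) (F : I -> C) :
  Im (\sum_(i <- r) F i) = \sum_(i <- r) Im (F i).
Proof. by elim: r => [|a r IH]; rewrite ?big_nil ?big_cons ?ImD ?IH. Qed.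

Lemma Im_gt0_neq0 x : 0 < Im x -> x != 0.
Proof. by apply: contraTneq => ->; rewrite ltxx. Qed.

Lemma Im_div_gt0_neq0 x y : 0 < Im (x / y) -> x != 0 /\ y != 0.
Proof.
by move=> H; split; apply: contraTneq H => ->; rewrite ?mul0r ?invr0 ?mulr0 ltxx.
Qed.

Lemma Im_oppV_gt0 x : 0 < Im x -> 0 < Im (- x^-1).
Proof.
move=> x0; rewrite ImN ImV opprK divr_gt0 //.
by rewrite ltr_pwDr ?sqr_ge0 // exprn_gt0.
Qed.

Lemma sqr_Re_Im_gt0 x : x != 0 -> 0 < Re x ^+ 2 + Im x ^+ 2.
Proof.
move=> x0; rewrite lt_neqAle addr_ge0 ?sqr_ge0 // andbT eq_sym.
apply: contra x0; rewrite paddr_eq0 ?sqr_ge0 // !sqrf_eq0 => /andP[/eqP h1 /eqP h2].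
by apply/eqP; apply: complex_ext; rewrite ?h1 ?h2.
Qed.

Lemma Im_div x y : y != 0 ->
  Im (x / y) = Im (y^* * x) / (Re y ^+ 2 + Im y ^+ 2).
Proof.
move=> y0; have := lt0r_neq0 (sqr_Re_Im_gt0 y0).
by rewrite ImM ReV ImV !ReImE => ?; field.
Qed.

Lemma normc_real (a : R) : `|a%:C| = `|a|%:C.
Proof. by rewrite normc_def /= expr0n addr0 sqrtr_sqr. Qed.

Lemma normc_i : `|'i| = 1 :> C.
Proof. by rewrite normc_def /= expr0n expr1n add0r sqrtr1. Qed.

Lemma normc_ge_Im x : `|Im x|%:C <= `|x|.
Proof. by have := normc_ge_Re (x * 'i); rewrite ReiNIm normrN normrM normc_i mulr1. Qed.

Lemma normc_le_Re_Im x : `|x| <= (`|Re x| + `|Im x|)%:C.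
Proof.
rewrite {1}[x]complexE rmorphD /= -!normc_real.
by rewrite (le_trans (ler_normD _ _)) // normrM normc_i mul1r.
Qed.

Lemma cexpD x y : cexp (x + y) = cexp x * cexp y.
Proof.
rewrite /cexp !ReD !ImD expRD sinD cosD.
by apply: complex_ext; rewrite !ReImE; ring.
Qed.

Lemma cexp0 : cexp (0 : C) = 1.
Proof. by rewrite /cexp /= expR0 cos0 sin0; apply: complex_ext; rewrite !ReImE; ring. Qed.

Lemma cexp_neq0 x : cexp x != 0.
Proof.
apply/negP => /eqP cx0.
have : cexp x * cexp (- x) = 1 by rewrite -cexpD subrr cexp0.
by rewrite cx0 mul0r => /eqP; rewrite eq_sym oner_eq0.
Qed.

Lemma cexpB x y : cexp (x - y) = cexp x / cexp y.
Proof. by apply: (mulIf (cexp_neq0 y)); rewrite -cexpD subrK divfK ?cexp_neq0. Qed.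

Lemma cexp_eq1 x : cexp x = 1 -> Re x = 0 /\ cos (Im x) = 1.
Proof.
rewrite /cexp => ex1.
have ec : expR (Re x) * cos (Im x) = 1.
  by move: (congr1 Re ex1); rewrite !ReImE; lra.
have es : expR (Re x) * sin (Im x) = 0.
  by move: (congr1 Im ex1); rewrite !ReImE; lra.
have s0 : sin (Im x) = 0.
  by move/eqP: es; rewrite mulf_eq0 gt_eqF ?expR_gt0 //= => /eqP.
have := cos2Dsin2 (Im x); rewrite s0 expr0n addr0 => /eqP.
rewrite sqrf_eq1 => /orP[/eqP c1|/eqP cN1].
  by split=> //; apply: expR_inj; rewrite expR0 -[RHS]ec c1 mulr1.
by have := expR_gt0 (Re x); rewrite cN1 in ec; lra.
Qed.

Lemma cexp_ipi : cexp (0 +i* pi) = -1 :> C.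
Proof. by rewrite /cexp /= expR0 cospi sinpi; apply: complex_ext; rewrite !ReImE; ring. Qed.

(** * Continuity along real lines *)

Definition rc_continuous f t : Prop :=
  (fun s => Re (f s)) @ t --> Re (f t) /\ (fun s => Im (f s)) @ t --> Im (f t).

Definition cc_continuous (g : C -> C) (z : C) : Prop :=
  forall e : R, 0 < e -> exists2 d : R, 0 < d &
    forall w, `|w - z| < d%:C -> `|g w - g z| < e%:C.

Lemma rc_continuousP f t : rc_continuous f t <->
  forall e : R, 0 < e -> exists2 d : R, 0 < d &
    forall s, `|s - t| < d -> `|f s - f t| < e%:C.
Proof.
split.
  case=> /cvgrPdist_lt cRe /cvgrPdist_lt cIm e e0.
  have e20 : 0 < e / 2 by rewrite divr_gt0.
  have /nbhs_ballP[d1 d10 Hd1] := cRe _ e20.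
  have /nbhs_ballP[d2 d20 Hd2] := cIm _ e20.
  exists (Num.min d1 d2) => [|s Hs]; first by rewrite lt_min d10 d20.
  have [s1 s2] : ball t d1 s /\ ball t d2 s.
    by rewrite /ball /= distrC; move: Hs; rewrite lt_min => /andP[].
  apply: (le_lt_trans (normc_le_Re_Im _)); rewrite ltcR ReD ImD ReN ImN.
  by rewrite [e]splitr ltrD // distrC; [exact: Hd1 | exact: Hd2].
move=> H; split; apply/cvgrPdist_lt => e e0; have [d d0 Hd] := H e e0;
  apply/nbhs_ballP; exists d => // s; rewrite /ball /= distrC => /Hd fst.
  rewrite distrC -ltcR; apply: le_lt_trans fst.
  by have := normc_ge_Re (f s - f t); rewrite ReD ReN.
rewrite distrC -ltcR; apply: le_lt_trans fst.
by have := normc_ge_Im (f s - f t); rewrite ImD ImN.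
Qed.

Lemma rc_continuous_cst (a : C) t : rc_continuous (fun _ => a) t.
Proof. by split; apply: cvg_cst. Qed.

Lemma rc_continuous_real t : rc_continuous (fun s => s%:C) t.
Proof. by split; [apply: cvg_id | apply: cvg_cst]. Qed.

Lemma rc_continuousD f g t :
  rc_continuous f t -> rc_continuous g t -> rc_continuous (fun s => f s + g s) t.
Proof.
case=> f1 f2 [g1 g2]; split.
  by rewrite ReD; under eq_fun do rewrite ReD; exact: cvgD.
by rewrite ImD; under eq_fun do rewrite ImD; exact: cvgD.
Qed.

Lemma rc_continuousN f t : rc_continuous f t -> rc_continuous (fun s => - f s) t.
Proof.
case=> f1 f2; split.
  by rewrite ReN; under eq_fun do rewrite ReN; exact: cvgN.
by rewrite ImN; under eq_fun do rewrite ImN; exact: cvgN.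
Qed.

Lemma rc_continuousB f g t :
  rc_continuous f t -> rc_continuous g t -> rc_continuous (fun s => f s - g s) t.
Proof. by move=> cf cg; apply: rc_continuousD cf (rc_continuousN cg). Qed.

Lemma rc_continuousM f g t :
  rc_continuous f t -> rc_continuous g t -> rc_continuous (fun s => f s * g s) t.
Proof.
case=> f1 f2 [g1 g2]; split.
  by rewrite ReM; under eq_fun do rewrite ReM; apply: cvgB; exact: cvgM.
by rewrite ImM; under eq_fun do rewrite ImM; apply: cvgD; exact: cvgM.
Qed.

Lemma rc_continuousV f t :
  f t != 0 -> rc_continuous f t -> rc_continuous (fun s => (f s)^-1) t.
Proof.
move=> ft0 [f1 f2].
have n0 := lt0r_neq0 (sqr_Re_Im_gt0 ft0).
have cn : (fun s => Re (f s) ^+ 2 + Im (f s) ^+ 2) @ t -->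
    Re (f t) ^+ 2 + Im (f t) ^+ 2.
  by apply: cvgD; rewrite expr2; under eq_fun do rewrite expr2; exact: cvgM.
split.
  by rewrite ReV; under eq_fun do rewrite ReV; apply: cvgM => //; exact: cvgV.
by rewrite ImV; under eq_fun do rewrite ImV; apply: cvgN; apply: cvgM => //; exact: cvgV.
Qed.

Lemma rc_continuous_div f g t : g t != 0 ->
  rc_continuous f t -> rc_continuous g t -> rc_continuous (fun s => f s / g s) t.
Proof. by move=> gt0 cf cg; apply: rc_continuousM cf (rc_continuousV gt0 cg). Qed.

Lemma rc_continuous_sum (I : Type) (r : seq I) (F : I -> R -> C) t :
  (forall i, rc_continuous (F i) t) -> rc_continuous (fun s => \sum_(i <- r) F i s) t.
Proof.
move=> cF; elim: r => [|a r IH].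
  by under eq_fun do rewrite big_nil; exact: rc_continuous_cst.
by under eq_fun do rewrite big_cons; exact: rc_continuousD.
Qed.

Lemma rc_continuous_prod (I : Type) (r : seq I) (F : I -> R -> C) t :
  (forall i, rc_continuous (F i) t) -> rc_continuous (fun s => \prod_(i <- r) F i s) t.
Proof.
move=> cF; elim: r => [|a r IH].
  by under eq_fun do rewrite big_nil; exact: rc_continuous_cst.
by under eq_fun do rewrite big_cons; exact: rc_continuousM.
Qed.

Lemma rc_continuous_det n (M E : 'M[C]_n) t :
  rc_continuous (fun s => \det (M + s%:C *: E)) t.
Proof.
under eq_fun do rewrite /determinant.
apply: rc_continuous_sum => sg; apply: rc_continuousM; first exact: rc_continuous_cst.
apply: rc_continuous_prod => i; under eq_fun do rewrite !mxE.
apply: rc_continuousD; first exact: rc_continuous_cst.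
by apply: rc_continuousM; [exact: rc_continuous_real | exact: rc_continuous_cst].
Qed.

Lemma rc_continuous_comp (g : C -> C) f t :
  cc_continuous g (f t) -> rc_continuous f t -> rc_continuous (fun s => g (f s)) t.
Proof.
move=> cg /rc_continuousP cf; apply/rc_continuousP => e e0.
have [d d0 Hd] := cg e e0; have [d' d'0 Hd'] := cf d d0.
by exists d' => // s /Hd'/Hd.
Qed.

Lemma cderivable0_continuous (f : C -> C) : cderivable0 f -> cc_continuous f 0.
Proof.
case=> L HL e e0.
have [d1 d10 Hd1] := HL 1 ltr01.
pose l := Re `|L|.
have lE : l%:C = `|L| by rewrite RRe_real ?normr_real.
have l1 : 0 < 1 + l by rewrite ltr_pwDl // -ler0c lE.
exists (Num.min d1 (e / (1 + l))) => [|w]; first by rewrite lt_min d10 divr_gt0.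
rewrite subr0 => wd.
have wd1 : `|w| < d1%:C by apply: lt_le_trans wd _; rewrite lecR ge_min lexx.
have wde : `|w| < (e / (1 + l))%:C.
  by apply: lt_le_trans wd _; rewrite lecR ge_min lexx orbT.
have [->|w0] := eqVneq w 0; first by rewrite subrr normr0 ltcR.
have q1 : `|(f w - f 0) / w - L| < 1 := Hd1 w w0 wd1.
have nq : `|(f w - f 0) / w| < (1 + l)%:C.
  have -> : (1 + l)%:C = 1 + `|L| by rewrite -lE rmorphD.
  rewrite -[X in `|X|](subrK L).
  by rewrite (le_lt_trans (ler_normD _ _)) // ltrD2r.
have -> : e%:C = (1 + l)%:C * (e / (1 + l))%:C.
  by rewrite -rmorphM /= mulrC divfK ?gt_eqF.
by rewrite -[f w - f 0](divfK w0) normrM ltr_pM ?normr_ge0.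
Qed.

Lemma continuous_IVT (f : R -> R) a b v : continuous f ->
  Num.min (f a) (f b) <= v <= Num.max (f a) (f b) -> exists c, f c = v.
Proof.
move=> cf; wlog ab : a b / a <= b => [hwlog|].
  by case: (leP a b) => [/hwlog//|/ltW ba]; rewrite minC maxC; exact: hwlog.
move=> hv; have [|c _ fc] := IVT ab _ hv; last by exists c.
exact: continuous_subspaceT.
Qed.

Lemma continuous_cos_eq1_const (psi : R -> R) : continuous psi ->
  (forall t, cos (psi t) = 1) -> forall a b, psi a = psi b.
Proof.
move=> cpsi cos1; suff psi_le a b : psi a <= psi b -> psi a = psi b.
  by move=> a b; case: (leP (psi a) (psi b)) => [/psi_le|/ltW/psi_le ->].
rewrite le_eqVlt => /orP[/eqP //|ab]; exfalso.
have sin0 : sin (psi a) = 0.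
  have /eqP := cos2Dsin2 (psi a).
  by rewrite cos1 expr1n addrC -subr_eq0 addrK sqrf_eq0 => /eqP.
pose d := Num.min (psi b - psi a) pi.
have d0 : 0 < d by rewrite lt_min subr_gt0 ab pi_gt0.
have [c psic] : exists c, psi c = psi a + d.
  apply: (continuous_IVT cpsi (a := a) (b := b)).
  rewrite ge_min le_max lerDl (ltW d0) /=.
  by apply/orP; right; rewrite -lerBrDl ge_min lexx.
have : cos d < cos 0.
  by rewrite ltr_cos ?in_itv /= ?lexx ?ge_min ?lexx ?orbT ?(ltW d0) ?(ltW (pi_gt0 R)).
by rewrite cos0 -(cos1 c) psic cosD cos1 sin0 mul0r subr0 mul1r ltxx.
Qed.

Lemma continuous_cexp_eq1_const (phi : R -> C) :
  (forall t, rc_continuous phi t) -> (forall t, cexp (phi t) = 1) ->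
  forall a b, phi a = phi b.
Proof.
move=> cphi e1 a b.
have Im_const := @continuous_cos_eq1_const (fun t => Im (phi t))
  (fun t => (cphi t).2) (fun t => (cexp_eq1 (e1 t)).2).
by apply: complex_ext; [rewrite !(cexp_eq1 (e1 _)).1 | exact: Im_const].
Qed.

(** * The Siegel upper half space *)

Lemma symE_tr n (k l : 'I_n) : (symE R k l)^T = symE R k l.
Proof.
apply/matrixP => a b; rewrite !mxE; congr (if _ then _ else _).
by rewrite orbC !(andbC (b == _)).
Qed.

Lemma siegel_shift n (Z : 'M[C]_n) (k l : 'I_n) t :
  siegel Z -> siegel (Z + t%:C *: symE R k l).
Proof.
case=> Zsym ImZ; split; first by rewrite linearD /= linearZ /= Zsym symE_tr.
suff -> : Immx (Z + t%:C *: symE R k l) = Immx Z by [].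
apply/matrixP => a b; rewrite !mxE ImD ImM /=.
by case: ifP => _; rewrite /= mulr0 mul0r !addr0.
Qed.

Lemma qform_sum n (Y : 'M[R]_n) (v : 'cV[R]_n) :
  (v^T *m Y *m v) 0 0 = \sum_i \sum_j v i 0 * Y i j * v j 0.
Proof.
rewrite mxE exchange_big /=; apply: eq_bigr => j _.
by rewrite mxE big_distrl /=; apply: eq_bigr => i _; rewrite mxE.
Qed.

Lemma posdef_qform_ge0 n (Y : 'M[R]_n) (v : 'cV[R]_n) :
  posdef Y -> 0 <= (v^T *m Y *m v) 0 0.
Proof.
case=> _ Ypos; have [->|v0] := eqVneq v 0; last exact/ltW/Ypos.
by rewrite mulmx0 mxE.
Qed.

Lemma posdef_mxsub m n (f : 'I_m -> 'I_n) (Y : 'M[R]_n) :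
  injective f -> posdef Y -> posdef (mxsub f f Y).
Proof.
move=> finj [Ysym Ypos]; split; first by rewrite trmx_mxsub Ysym.
pose P : 'M[R]_(m, n) := rowsub f 1%:M.
have PT : P^T = colsub f 1%:M by rewrite trmx_mxsub trmx1.
have PPT : P *m P^T = 1%:M.
  by rewrite PT /P -mxsub_mul mulmx1; apply/matrixP => a b; rewrite !mxE (inj_eq finj).
have YE : mxsub f f Y = P *m Y *m P^T.
  rewrite PT /P mulmx_colsub mul_rowsub_mx mul1mx mulmx1.
  by apply/matrixP => a b; rewrite !mxE.
move=> v v0; have PTv0 : P^T *m v != 0.
  by apply: contraNneq v0 => PTv; rewrite -[v]mul1mx -PPT -mulmxA PTv mulmx0.
by rewrite YE !mulmxA -[v^T *m P]trmxK trmx_mul trmxK -!mulmxA mulmxA; exact: Ypos.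
Qed.

Lemma siegel_mxsub m n (f : 'I_m -> 'I_n) (Z : 'M[C]_n) :
  injective f -> siegel Z -> siegel (mxsub f f Z).
Proof.
move=> finj [Zsym ImZ]; split; first by rewrite trmx_mxsub Zsym.
by rewrite /Immx map_mxsub; exact: posdef_mxsub.
Qed.

Lemma widen_ord_inj j n (h : (j <= n)%N) : injective (widen_ord h).
Proof. by move=> a b /(congr1 val) /= /val_inj. Qed.

Lemma siegel_ulblock j n (h : (j <= n)%N) (Z : 'M[C]_n) :
  siegel Z -> siegel (ulblock h Z).
Proof. exact/siegel_mxsub/widen_ord_inj. Qed.

Lemma iY_mxsub m n (f : 'I_m -> 'I_n) (Y : 'M[R]_n) :
  iY (mxsub f f Y) = mxsub f f (iY Y).
Proof. exact: map_mxsub. Qed.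

Lemma siegel_iY n (Y : 'M[R]_n) : posdef Y -> siegel (iY Y).
Proof.
move=> Ypos; have [Ysym _] := Ypos.
have ImiY : Immx (iY Y) = Y by apply/matrixP => a b; rewrite !mxE.
by split; [rewrite /iY map_trmx Ysym | rewrite ImiY].
Qed.

Lemma det_iY n (Y : 'M[R]_n) : \det (iY Y) = 'i ^+ n * (\det Y)%:C.
Proof.
have -> : iY Y = 'i *: map_mx (real_complex R) Y.
  by apply/matrixP => a b; rewrite !mxE; apply: complex_ext; rewrite !ReImE /=; ring.
by rewrite detZ det_map_mx.
Qed.

Definition hform n (Z : 'M[C]_n) (v : 'cV[C]_n) : C :=
  \sum_i \sum_j (v i 0)^* * Z i j * v j 0.

Lemma hformE n (Z : 'M[C]_n) (v : 'cV[C]_n) :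
  hform Z v = \sum_i (v i 0)^* * (Z *m v) i 0.
Proof.
apply: eq_bigr => i _; rewrite mxE big_distrr /=.
by apply: eq_bigr => j _; rewrite mulrA.
Qed.

Lemma Im_hform n (Z : 'M[C]_n) (v : 'cV[C]_n) : Z^T = Z ->
  Im (hform Z v) = ((map_mx Re v)^T *m Immx Z *m map_mx Re v) 0 0 +
                   ((map_mx Im v)^T *m Immx Z *m map_mx Im v) 0 0.
Proof.
move=> Zsym; have Zji i j : Z j i = Z i j by rewrite -[in RHS]Zsym mxE.
pose a i := Re (v i 0); pose b i := Im (v i 0).
have skew0 : \sum_i \sum_j (a i * b j - b i * a j) * Re (Z i j) = 0.
  have -> : \sum_i \sum_j (a i * b j - b i * a j) * Re (Z i j) =
      \sum_i \sum_j a i * b j * Re (Z i j) - \sum_i \sum_j b i * a j * Re (Z i j).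
    by rewrite -sumrB; apply: eq_bigr => i _; rewrite -sumrB; apply: eq_bigr => j _; ring.
  apply/eqP; rewrite [X in _ - X]exchange_big /= subr_eq0; apply/eqP.
  by apply: eq_bigr => i _; apply: eq_bigr => j _; rewrite Zji; ring.
rewrite /hform Im_sum (eq_bigr (fun i => \sum_j
    ((a i * Im (Z i j) * a j + b i * Im (Z i j) * b j) +
     (a i * b j - b i * a j) * Re (Z i j)))); last first.
  by move=> i _; rewrite Im_sum; apply: eq_bigr => j _; rewrite !ReImE /a /b; ring.
under eq_bigr do rewrite big_split; rewrite big_split /= skew0 addr0.
rewrite !qform_sum -big_split; apply: eq_bigr => i _; rewrite -big_split.
by apply: eq_bigr => j _; rewrite !mxE.
Qed.

Lemma Im_hform_gt0 n (Z : 'M[C]_n) (v : 'cV[C]_n) :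
  siegel Z -> v != 0 -> 0 < Im (hform Z v).
Proof.
case=> Zsym ImZ v0; rewrite Im_hform //.
have [Rev0|Rev0] := eqVneq (map_mx Re v) 0; last first.
  by rewrite ltr_pwDl ?posdef_qform_ge0 //; case: ImZ => _; apply.
have Imv0 : map_mx Im v != 0.
  apply: contra_neq v0 => Imv0; apply/matrixP => i j; apply: complex_ext.
    by have /matrixP/(_ i j) := Rev0; rewrite !mxE.
  by have /matrixP/(_ i j) := Imv0; rewrite !mxE.
by rewrite Rev0 mulmx0 mxE add0r; case: ImZ => _; apply.
Qed.

Lemma siegel_det_neq0 n (Z : 'M[C]_n) : siegel Z -> \det Z != 0.
Proof.
move=> sZ; apply/negP => /det0P[v v0 vZ].
have vT0 : v^T != 0 by rewrite trmx_eq0.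
have := Im_hform_gt0 sZ vT0.
have ZvT : Z *m v^T = 0 by case: sZ => Zsym _; rewrite -[Z]Zsym -trmx_mul vZ trmx0.
by rewrite hformE ZvT big1 ?ltxx // => i _; rewrite !mxE mulr0.
Qed.

Lemma Im_det_div_ulblock_gt0 n (h : (n <= n.+1)%N) (Z : 'M[C]_n.+1) :
  siegel Z -> 0 < Im (\det Z / \det (ulblock h Z)).
Proof.
(* Test the Hermitian form on the last column of [\adj Z]. *)
move=> sZ; have dU := siegel_det_neq0 (siegel_ulblock h sZ).
set U := ulblock h Z in dU *.
pose v := col ord_max (\adj Z).
have Zv : Z *m v = \det Z *: delta_mx ord_max 0.
  by rewrite /v colE mulmxA mul_mx_adj mul_scalar_mx.
have vmax : v ord_max 0 = \det U.
  rewrite !mxE /cofactor; have -> : row' ord_max (col' ord_max Z) = U.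
    by apply/matrixP => a b; rewrite !mxE; congr (Z _ _); apply: val_inj;
      rewrite /= /bump leqNgt ltn_ord.
  by rewrite /= addnn -signr_odd odd_double expr0 mul1r.
have v0 : v != 0 by apply: contra_neq dU => v0; rewrite -vmax v0 mxE.
have := Im_hform_gt0 sZ v0.
rewrite hformE Zv (bigD1 ord_max) //= big1 => [|i /negbTE imax]; last first.
  by rewrite !mxE imax mulr0 mulr0.
rewrite vmax !mxE !eqxx mulr1 addr0 Im_div // => ?.
by rewrite divr_gt0 ?sqr_Re_Im_gt0.
Qed.

Lemma siegel_oppV n (Z : 'M[C]_n) : siegel Z -> siegel (- invmx Z).
Proof.
move=> sZ; have [Zsym _] := sZ.
have uZ : Z \in unitmx by rewrite unitmxE unitfE siegel_det_neq0.
have iZsym : (- invmx Z)^T = - invmx Z by rewrite linearN /= trmx_inv Zsym.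
split => //; split; first by rewrite /Immx map_trmx iZsym.
move=> v v0; pose w := invmx Z *m map_mx (real_complex R) v.
have w0 : w != 0.
  apply: contra_neq v0 => w0; apply/matrixP => i j.
  have /matrixP/(_ i j) := mulKVmx uZ (map_mx (real_complex R) v).
  by rewrite -/w w0 mulmx0 !mxE => /(congr1 Re).
have Imw i : Im (w i 0) = \sum_j Im (invmx Z i j) * v j 0.
  by rewrite mxE Im_sum; apply: eq_bigr => j _; rewrite mxE ImM /= mulr0 add0r.
suff -> : (v^T *m Immx (- invmx Z) *m v) 0 0 = Im (hform Z w).
  exact: Im_hform_gt0.
rewrite qform_sum hformE mulKVmx // Im_sum; apply: eq_bigr => i _.
rewrite [(map_mx _ v) i 0]mxE ImM ImJ /= mulr0 add0r mulNr Imw mulr_suml -sumrN.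
by apply: eq_bigr => j _; rewrite !mxE ImN; ring.
Qed.

Lemma Wmx_conj (Z : 'M[C]_3) :
  Wmx R *m Z *m Wmx R = mxsub (@rev_ord 3) (@rev_ord 3) Z.
Proof.
have WE (i k : 'I_3) : Wmx R i k = if k == rev_ord i then 1 else 0.
  rewrite mxE; congr (if _ then _ else _).
  by case: i => [[|[|[|i]]] hi] //; case: k => [[|[|[|k]]] hk].
apply/matrixP => i j; rewrite !mxE (bigD1 (rev_ord j)) //= big1 ?addr0.
  rewrite WE rev_ordK eqxx mulr1 mxE (bigD1 (rev_ord i)) //= big1 ?addr0.
    by rewrite WE eqxx mul1r.
  by move=> k /negbTE ki; rewrite WE ki mul0r.
move=> k kj; rewrite WE (_ : (j == rev_ord k) = false) ?mulr0 //.
by apply: contraNF kj => /eqP ->; rewrite rev_ordK.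
Qed.

Lemma siegel_Wmx_conj (Z : 'M[C]_3) : siegel Z -> siegel (Wmx R *m Z *m Wmx R).
Proof. by rewrite Wmx_conj; exact/siegel_mxsub/rev_ord_inj. Qed.

(** * Determining a branch of [log det] *)

Lemma holo_siegel_line_continuous n (h : 'M[C]_n -> C) (Z : 'M[C]_n) (k l : 'I_n) (t : R) :
  holo_siegel h -> siegel Z -> rc_continuous (fun s => h (Z + s%:C *: symE R k l)) t.
Proof.
move=> hh sZ; have cz := cderivable0_continuous (hh _ (siegel_shift k l t sZ) k l).
apply/rc_continuousP => e e0; have [d d0 Hd] := cz e e0.
exists d => // s st; have := Hd (s - t)%:C; rewrite subr0 normc_real ltcR => /(_ st).
by rewrite scale0r addr0 -addrA -scalerDl -rmorphD /= (addrC t) subrK.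
Qed.

Definition mask_Re n (Z : 'M[C]_n) (s : seq ('I_n * 'I_n)) : 'M[C]_n :=
  \matrix_(a, b)
    ((if ((a, b) \in s) || ((b, a) \in s) then Re (Z a b) else 0) +i* Im (Z a b)).

Definition upper_pairs n : seq ('I_n * 'I_n) :=
  enum [pred p : 'I_n * 'I_n | (p.1 <= p.2)%N].

Lemma mask_Re_nil n (Z : 'M[C]_n) : mask_Re Z [::] = iY (Immx Z).
Proof. by apply/matrixP => a b; rewrite !mxE. Qed.

Lemma mask_Re_upper_pairs n (Z : 'M[C]_n) : mask_Re Z (upper_pairs n) = Z.
Proof.
apply/matrixP => a b; rewrite !mxE !mem_enum !inE /= leq_total.
by case: (Z a b).
Qed.

Lemma siegel_mask_Re n (Z : 'M[C]_n) s : siegel Z -> siegel (mask_Re Z s).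
Proof.
case=> Zsym ImZ; have Zji a b : Z b a = Z a b by rewrite -[in RHS]Zsym mxE.
split; first by apply/matrixP => a b; rewrite !mxE Zji orbC.
by rewrite (_ : Immx _ = Immx Z) //; apply/matrixP => a b; rewrite !mxE.
Qed.

Lemma mask_Re_cons n (Z : 'M[C]_n) s (k l : 'I_n) : Z^T = Z -> (k <= l)%N ->
  (k, l) \notin s -> all (fun p : 'I_n * 'I_n => (p.1 <= p.2)%N) s ->
  mask_Re Z ((k, l) :: s) = mask_Re Z s + (Re (Z k l))%:C *: symE R k l.
Proof.
move=> Zsym kl kls s_upper; have Zji a b : Z b a = Z a b by rewrite -[in RHS]Zsym mxE.
have lks : (l, k) \notin s.
  apply: contra kls => lks; have lk : k = l.
    by apply/val_inj/eqP; rewrite eqn_leq kl (allP s_upper _ lks).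
  by move: lks; rewrite -lk.
apply/matrixP => a b; rewrite !mxE !in_cons !xpair_eqE.
have [|abkl] := boolP ((a == k) && (b == l) || (a == l) && (b == k)).
  case/orP => /andP[/eqP-> /eqP->];
    rewrite (negbTE kls) (negbTE lks) !eqxx /= ?orbT ?(Zji k l);
    by apply: complex_ext; rewrite !ReImE /=; ring.
move: abkl; rewrite negb_or [(a == l) && _]andbC => /andP[/negbTE-> /negbTE->] /=.
by apply: complex_ext; rewrite !ReImE /=; ring.
Qed.

(* Switch on the real parts of the entries one symmetric pair at a time, starting
   from [iY (Immx Z)]: along each step [G] is continuous with values in [2 pi i Z]. *)
Lemma eq0_on_siegel n (G : 'M[C]_n -> C) :
  (forall Z, siegel Z -> cexp (G Z) = 1) ->
  (forall Z k l t, siegel Z -> rc_continuous (fun s => G (Z + s%:C *: symE R k l)) t) ->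
  (forall Y, posdef Y -> G (iY Y) = 0) ->
  forall Z, siegel Z -> G Z = 0.
Proof.
move=> G1 Gcont GiY Z sZ; have [Zsym ImZ] := sZ.
suff G0 s : uniq s -> all (fun p : 'I_n * 'I_n => (p.1 <= p.2)%N) s -> G (mask_Re Z s) = 0.
  rewrite -(mask_Re_upper_pairs Z) G0 ?enum_uniq //.
  by apply/allP => p; rewrite mem_enum.
elim: s => [|[k l] s IH] /=; first by rewrite mask_Re_nil GiY.
case/andP=> kls s_uniq /andP[kl s_upper]; rewrite mask_Re_cons //.
have sZs := siegel_mask_Re s sZ.
rewrite (@continuous_cexp_eq1_const (fun t => G (mask_Re Z s + t%:C *: symE R k l))
  (fun t => Gcont _ k l t sZs) (fun t => G1 _ (siegel_shift k l t sZs)) _ 0).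
by rewrite scale0r addr0 IH.
Qed.

Section UpperHalfPlaneLog.
Variable h1 : 'M[C]_1 -> C.

Definition log_h1 (w : C) : C := h1 w%:M.

Lemma siegel_scalar (z : C) : 0 < Im z -> siegel (z%:M : 'M[C]_1).
Proof.
move=> z0; split; first by rewrite tr_scalar_mx.
split; first by apply/matrixP => a b; rewrite !ord1 mxE.
move=> v v0; have v00 : v 0 0 != 0.
  by apply: contra_neq v0 => v00; apply/matrixP => a b; rewrite !ord1 v00 mxE.
rewrite qform_sum !big_ord1 !mxE /= mulr1n mulrAC -expr2.
by rewrite mulr_gt0 // exprn_even_gt0.
Qed.

Lemma log_h1_continuous (z : C) : holo_siegel h1 -> 0 < Im z -> cc_continuous log_h1 z.
Proof.
move=> hh z0 e e0; have cz := cderivable0_continuous (hh _ (siegel_scalar z0) ord0 ord0).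
have [d d0 Hd] := cz e e0.
exists d => // w wz; have := Hd (w - z); rewrite subr0 scale0r addr0 => /(_ wz).
suff -> : z%:M + (w - z) *: symE R ord0 ord0 = w%:M :> 'M[C]_1 by [].
by apply/matrixP => a b; rewrite !ord1 !mxE /= !mulr1n mulr1 addrC subrK.
Qed.

Hypothesis h1_log : is_hn h1.

Lemma cexp_log_h1 (z : C) : 0 < Im z -> cexp (log_h1 z) = z.
Proof.
case: h1_log => _ h1exp _ z0.
by rewrite /log_h1 h1exp ?det_scalar1 //; exact: siegel_scalar.
Qed.

Lemma log_h1_iy (y : R) : 0 < y -> log_h1 (0 +i* y) = (0 +i* (pi / 2)) + (ln y)%:C.
Proof.
case: h1_log => _ _ h1iY y0; have y1 : posdef (y%:M : 'M[R]_1).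
  have /siegel_scalar[_] : 0 < Im (0 +i* y) by [].
  by rewrite (_ : Immx _ = y%:M) //; apply/matrixP => a b; rewrite !ord1 !mxE /= !mulr1n.
have := h1iY _ y1; rewrite det_scalar1 mulr1 => <-.
by rewrite /log_h1; congr h1; apply/matrixP => a b; rewrite !ord1 !mxE /= !mulr1n.
Qed.

(* Both sides differ by a continuous function of [Re w] with values in [2 pi i Z],
   which vanishes on the imaginary axis. *)
Lemma log_h1_oppV (w : C) : 0 < Im w -> log_h1 (- w^-1) = (0 +i* pi) - log_h1 w.
Proof.
move=> w0; have [hh _ _] := h1_log.
pose u (s : R) := s%:C + (0 +i* Im w).
have u0 s : 0 < Im (u s) by rewrite ImD /= add0r.
pose phi s := log_h1 (- (u s)^-1) + log_h1 (u s) - (0 +i* pi).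
have uw : u (Re w) = w by apply: complex_ext; rewrite !ReImE /=; ring.
suff : phi (Re w) = 0.
  by rewrite /phi uw => /eqP; rewrite subr_eq0 => /eqP <-; rewrite addrK.
rewrite (@continuous_cexp_eq1_const phi _ _ _ 0).
- have yinv : - (0 +i* Im w)^-1 = 0 +i* (Im w)^-1.
    apply: complex_ext; first by rewrite ReN ReV /= mul0r oppr0.
    by rewrite ImN ImV /= opprK expr2 mul0r add0r; field; exact: lt0r_neq0.
  rewrite /phi /u add0r yinv !log_h1_iy ?invr_gt0 // lnV ?posrE //.
  by apply: complex_ext; rewrite !ReImE /=; [ring | field].
- move=> t; apply: rc_continuousB; last exact: rc_continuous_cst.
  have cu : rc_continuous u t.
    by apply: rc_continuousD; [exact: rc_continuous_real | exact: rc_continuous_cst].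
  apply: rc_continuousD; apply: rc_continuous_comp => //.
    exact/log_h1_continuous/Im_oppV_gt0.
  exact/rc_continuousN/rc_continuousV/cu/Im_gt0_neq0.
  exact: log_h1_continuous.
- move=> t; rewrite /phi cexpB cexpD !cexp_log_h1 ?Im_oppV_gt0 // cexp_ipi.
  by rewrite mulNr mulVf ?Im_gt0_neq0 // divrr ?unitrN ?unitr1.
Qed.

End UpperHalfPlaneLog.

Lemma det_iY_div n (Y : 'M[R]_n.+1) (Y' : 'M[R]_n) : \det Y' != 0 ->
  \det (iY Y) / \det (iY Y') = 0 +i* (\det Y / \det Y').
Proof.
move=> dY'; rewrite !det_iY exprS.
have i0 : 'i ^+ n != 0 :> C by rewrite expf_neq0 // Im_gt0_neq0 /= ?ltr01.
have dY'C : (\det Y')%:C != 0 :> C by apply: contra_neq dY' => /(congr1 Re).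
set I := 'i ^+ n in i0 *; set b := (\det Y')%:C in dY'C *.
rewrite (_ : 'i * I * _ / (I * b) = 'i * ((\det Y)%:C / b)); last by field; rewrite i0 dY'C.
by rewrite -fmorph_div; apply: complex_ext; rewrite !ReImE /=; ring.
Qed.

Lemma det_iY_div_ulblock n (h : (n <= n.+1)%N) (Y : 'M[R]_n.+1) :
  \det (mxsub (widen_ord h) (widen_ord h) Y) != 0 ->
  \det (iY Y) / \det (ulblock h (iY Y)) =
    0 +i* (\det Y / \det (mxsub (widen_ord h) (widen_ord h) Y)).
Proof. by move=> dU; rewrite -[ulblock h _]/(mxsub _ _ _) -iY_mxsub det_iY_div. Qed.

Lemma posdef_det_gt0 n (Y : 'M[R]_n) : posdef Y -> 0 < \det Y.
Proof.
elim: n => [|n IH] in Y *; first by rewrite det_mx00.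
move=> Ypos; have h := leqnSn n.
have /IH dU := posdef_mxsub (@widen_ord_inj _ _ h) Ypos.
have := Im_det_div_ulblock_gt0 h (siegel_iY Ypos).
rewrite det_iY_div_ulblock ?lt0r_neq0 //= => piv.
by rewrite -(divfK (lt0r_neq0 dU) (\det Y)) mulr_gt0.
Qed.

Lemma ulblock_symE m (h : (m <= m.+1)%N) (k l : 'I_m.+1) :
  (exists k' l', ulblock h (symE R k l) = symE R k' l') \/ ulblock h (symE R k l) = 0.
Proof.
have wF (a : 'I_m) (c : 'I_m.+1) : (m <= c)%N -> (widen_ord h a == c) = false.
  move=> mc; apply/negbTE; rewrite -(inj_eq val_inj) /= neq_ltn.
  by rewrite (leq_trans (ltn_ord a) mc).
case: (ltnP k m) => [km|mk]; last first.
  by right; apply/matrixP => a b; rewrite !mxE !(wF _ k) // andbF.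
case: (ltnP l m) => [lm|ml]; last first.
  by right; apply/matrixP => a b; rewrite !mxE !(wF _ l) // andbF.
left; exists (Ordinal km), (Ordinal lm); apply/matrixP => a b; rewrite !mxE.
by rewrite -!(inj_eq val_inj).
Qed.

Section LogDetStep.
Variables (m : nat) (h1 : 'M[C]_1 -> C) (hm : 'M[C]_m.+1 -> C) (hn : 'M[C]_m.+2 -> C).
Hypotheses (h1_log : is_hn h1) (hm_log : is_hn hm) (hn_log : is_hn hn).
Variable hle : (m.+1 <= m.+2)%N.

Let defect (W : 'M[C]_m.+2) :=
  hn W - hm (ulblock hle W) - log_h1 h1 (\det W / \det (ulblock hle W)).

Let cexp_defect W : siegel W -> cexp (defect W) = 1.
Proof.
move=> sW; have [_ hm_exp _] := hm_log; have [_ hn_exp _] := hn_log.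
have piv := Im_det_div_ulblock_gt0 hle sW; have sU := siegel_ulblock hle sW.
by rewrite /defect !cexpB cexp_log_h1 // hn_exp // hm_exp // divff ?Im_gt0_neq0.
Qed.

Let defect_line W k l t : siegel W ->
  rc_continuous (fun s => defect (W + s%:C *: symE R k l)) t.
Proof.
move=> sW; have [hh1 _ _] := h1_log; have [hhm _ _] := hm_log; have [hhn _ _] := hn_log.
have sWt := siegel_shift k l t sW.
have ulE s : ulblock hle (W + s%:C *: symE R k l) =
    ulblock hle W + s%:C *: ulblock hle (symE R k l).
  by apply/matrixP => a b; rewrite !mxE.
rewrite /defect; apply: rc_continuousB; first apply: rc_continuousB.
- exact: holo_siegel_line_continuous.
- under eq_fun do rewrite ulE.
  case: (ulblock_symE hle k l) => [[k' [l' ->]] | ->].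
    exact/holo_siegel_line_continuous/siegel_ulblock.
  by under eq_fun do rewrite scaler0 addr0; exact: rc_continuous_cst.
apply: rc_continuous_comp.
  exact/log_h1_continuous/Im_det_div_ulblock_gt0.
apply: rc_continuous_div; first exact/siegel_det_neq0/siegel_ulblock.
  exact: rc_continuous_det.
by under eq_fun do rewrite ulE; exact: rc_continuous_det.
Qed.

Let defect_iY Y : posdef Y -> defect (iY Y) = 0.
Proof.
move=> Ypos; have [_ _ hm_iY] := hm_log; have [_ _ hn_iY] := hn_log.
set Yb := mxsub (widen_ord hle) (widen_ord hle) Y.
have Ybpos : posdef Yb := posdef_mxsub (@widen_ord_inj _ _ hle) Ypos.
have dY := posdef_det_gt0 Ypos; have dYb := posdef_det_gt0 Ybpos.
rewrite /defect det_iY_div_ulblock ?lt0r_neq0 //.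
rewrite -[ulblock hle _]/(mxsub _ _ _) -iY_mxsub hn_iY // hm_iY // log_h1_iy ?divr_gt0 //.
have lnE : ln (\det Y) = ln (\det Y / \det Yb) + ln (\det Yb).
  by rewrite -lnM ?posrE ?divr_gt0 // divfK ?lt0r_neq0.
apply: complex_ext; rewrite !ReImE /=; first by move: lnE; rewrite /Yb; lra.
by rewrite -[m.+2]addn2 -[m.+1]addn1 !natrD; field.
Qed.

Lemma is_hn_step W : siegel W ->
  hn W = hm (ulblock hle W) + log_h1 h1 (\det W / \det (ulblock hle W)).
Proof.
move=> sW; have /eqP := eq0_on_siegel cexp_defect defect_line defect_iY sW.
by rewrite /defect subr_eq0 subr_eq => /eqP ->; rewrite addrC.
Qed.

End LogDetStep.

(** * Degree three *)

Section Degree3.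

Definition pivot1 (M : 'M[C]_3) : C := M ord0 ord0.
Definition pivot2 (M : 'M[C]_3) : C := \det (ulblock (isT : (2 <= 3)%N) M) / M ord0 ord0.
Definition pivot3 (M : 'M[C]_3) : C := \det M / \det (ulblock (isT : (2 <= 3)%N) M).

Let o0 : 'I_3 := ord0.
Let o1 : 'I_3 := @Ordinal 3 1 isT.
Let o2 : 'I_3 := ord_max.

(* Entries at concrete indices reduce by computation, so the cofactor expansions
   of [mx3 ...] below evaluate by [/=]. *)
Let mx3 (a b c d e f g h k : C) : 'M[C]_3 :=
  \matrix_(i, j) nth 0 (nth [::] [:: [:: a; b; c]; [:: d; e; f]; [:: g; h; k]] i) j.

Let mx3_eta (M : 'M[C]_3) :
  M = mx3 (M o0 o0) (M o0 o1) (M o0 o2) (M o1 o0) (M o1 o1) (M o1 o2)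
          (M o2 o0) (M o2 o1) (M o2 o2).
Proof.
apply/matrixP => i j; rewrite mxE.
by case: i => [[|[|[|i]]] hi] //; case: j => [[|[|[|j]]] hj] //=;
  congr (M _ _); exact: val_inj.
Qed.

Let det2 (N : 'M[C]_2) :
  \det N = N ord0 ord0 * N ord_max ord_max - N ord0 ord_max * N ord_max ord0.
Proof.
rewrite (expand_det_row _ ord0) !big_ord_recr big_ord0 /= /cofactor !det_mx11 !mxE /=.
have w : widen_ord (leqnSn 1) ord_max = ord0 :> 'I_2 by apply: val_inj.
have l0 : lift ord0 0 = ord_max :> 'I_2 by apply: val_inj.
have l1 : lift ord_max 0 = ord0 :> 'I_2 by apply: val_inj.
by rewrite w l0 l1 /= expr0 expr1; ring.
Qed.

Let det_mx3 (a b c d e f g h k : C) :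
  \det (mx3 a b c d e f g h k) =
    a * (e * k - f * h) - b * (d * k - f * g) + c * (d * h - e * g).
Proof.
by rewrite (expand_det_row _ ord0) !big_ord_recr big_ord0 /= /cofactor !det2 !mxE /=; ring.
Qed.

Let det3E (M : 'M[C]_3) : \det M =
  M o0 o0 * (M o1 o1 * M o2 o2 - M o1 o2 * M o2 o1)
  - M o0 o1 * (M o1 o0 * M o2 o2 - M o1 o2 * M o2 o0)
  + M o0 o2 * (M o1 o0 * M o2 o1 - M o1 o1 * M o2 o0).
Proof. by rewrite {1}[M]mx3_eta det_mx3. Qed.

Let ulblock1E (h : (1 <= 3)%N) (M : 'M[C]_3) : ulblock h M = (M o0 o0)%:M.
Proof.
by apply/matrixP => a b; rewrite !ord1 !mxE /= mulr1n; congr (M _ _); exact: val_inj.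
Qed.

Let ulblock12E (h : (2 <= 3)%N) (h' : (1 <= 2)%N) (M : 'M[C]_3) :
  ulblock h' (ulblock h M) = (M o0 o0)%:M.
Proof.
by apply/matrixP => a b; rewrite !ord1 !mxE /= mulr1n; congr (M _ _); exact: val_inj.
Qed.

Let det_ulblock2 (h : (2 <= 3)%N) (M : 'M[C]_3) :
  \det (ulblock h M) = M o0 o0 * M o1 o1 - M o0 o1 * M o1 o0.
Proof. by rewrite det2 !mxE; congr (M _ _ * M _ _ - M _ _ * M _ _); exact: val_inj. Qed.

Let adj3E (M : 'M[C]_3) :
  [/\ \adj M o0 o0 = M o1 o1 * M o2 o2 - M o1 o2 * M o2 o1,
      \adj M o0 o1 = - (M o0 o1 * M o2 o2 - M o0 o2 * M o2 o1),
      \adj M o1 o0 = - (M o1 o0 * M o2 o2 - M o1 o2 * M o2 o0) &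
      \adj M o1 o1 = M o0 o0 * M o2 o2 - M o0 o2 * M o2 o0].
Proof. by rewrite [M]mx3_eta; split; rewrite !mxE /cofactor det2 !mxE /=; ring. Qed.

Lemma Im_pivots_gt0 (M : 'M[C]_3) : siegel M ->
  [/\ 0 < Im (pivot1 M), 0 < Im (pivot2 M) & 0 < Im (pivot3 M)].
Proof.
move=> sM; have sU := siegel_ulblock (isT : (2 <= 3)%N) sM; split.
- have := Im_det_div_ulblock_gt0 (isT : (0 <= 1)%N) (siegel_ulblock (isT : (1 <= 3)%N) sM).
  by rewrite ulblock1E det_scalar1 det_mx00 divr1.
- by have := Im_det_div_ulblock_gt0 (isT : (1 <= 2)%N) sU; rewrite ulblock12E det_scalar1.
- exact: Im_det_div_ulblock_gt0.
Qed.

Lemma pivots_oppV_Wmx_conj (Z : 'M[C]_3) : siegel Z ->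
  [/\ pivot1 (- invmx Z) = - (pivot3 (Wmx R *m Z *m Wmx R))^-1,
      pivot2 (- invmx Z) = - (pivot2 (Wmx R *m Z *m Wmx R))^-1 &
      pivot3 (- invmx Z) = - (pivot1 (Wmx R *m Z *m Wmx R))^-1].
Proof.
move=> sZ; have dZ := siegel_det_neq0 sZ.
have [/Im_gt0_neq0 B1 /Im_div_gt0_neq0[B2 _] _] := Im_pivots_gt0 (siegel_Wmx_conj sZ).
have uZ : Z \in unitmx by rewrite unitmxE unitfE.
have AE i j : (- invmx Z) i j = - ((\det Z)^-1 * \adj Z i j).
  by rewrite /invmx uZ !mxE.
have detA : \det (- invmx Z) = - (\det Z)^-1.
  by rewrite -scaleN1r detZ det_inv; ring.
have BE i j : (Wmx R *m Z *m Wmx R) i j = Z (rev_ord i) (rev_ord j).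
  by rewrite Wmx_conj mxE.
have [r0 r1 r2] : [/\ rev_ord o0 = o2, rev_ord o1 = o1 & rev_ord o2 = o0].
  by split; apply: val_inj.
have dB : \det (Wmx R *m Z *m Wmx R) = \det Z.
  by rewrite !det3E !BE r0 r1 r2; ring.
have [a00 a01 a10 a11] := adj3E Z.
move: B1 B2; rewrite /pivot1 /pivot2 /pivot3 dB !det_ulblock2 detA !AE !BE ?r0 ?r1 ?r2.
rewrite a00 a01 a10 a11 => B1 B2; rewrite det3E in dZ *.
split; field; rewrite ?dZ ?B1 ?B2 //=.
set e := (X in X != 0).
have -> : e = Z o2 o2 * (Z o0 o0 * (Z o1 o1 * Z o2 o2 - Z o1 o2 * Z o2 o1) -
    Z o0 o1 * (Z o1 o0 * Z o2 o2 - Z o1 o2 * Z o2 o0) +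
    Z o0 o2 * (Z o1 o0 * Z o2 o1 - Z o1 o1 * Z o2 o0)) by rewrite /e; ring.
by rewrite mulf_neq0.
Qed.

Lemma pfun_pivots (h1 : 'M[C]_1 -> C) (h2 : 'M[C]_2 -> C) (h3 : 'M[C]_3 -> C)
  (s w u : C) (M : 'M[C]_3) : is_hn h1 -> is_hn h2 -> is_hn h3 -> siegel M ->
  pfun h1 h2 h3 s w u M = cexp ((s + w + u) * log_h1 h1 (pivot1 M) +
    (w + u) * log_h1 h1 (pivot2 M) + u * log_h1 h1 (pivot3 M)).
Proof.
move=> H1 H2 H3 sM; have sU := siegel_ulblock (isT : (2 <= 3)%N) sM.
rewrite /pfun (is_hn_step H1 H2 H3 isT sM) (is_hn_step H1 H1 H2 isT sU).
rewrite ulblock12E ulblock1E det_scalar1 -!cexpD; congr cexp.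
by rewrite /pivot1 /pivot2 /pivot3 /log_h1; ring.
Qed.

End Degree3.

End TransformationLaw.

Theorem claim1 (R : realType)
  (h1 : 'M[R[i]]_1 -> R[i]) (h2 : 'M[R[i]]_2 -> R[i]) (h3 : 'M[R[i]]_3 -> R[i])
  (H1 : is_hn h1) (H2 : is_hn h2) (H3 : is_hn h3)
  (s1 s2 s3 : R[i]) (Z : 'M[R[i]]_3) (HZ : siegel Z) :
  pfun h1 h2 h3 s1 s2 s3 (- invmx Z) =
  cexp ((s1 + 2 * s2 + 3 * s3) * (0 +i* pi)) *
  pfun h1 h2 h3 s2 s1 (- s1 - s2 - s3) (Wmx R *m Z *m Wmx R).
Proof.
have sA := siegel_oppV HZ; have sW := siegel_Wmx_conj HZ.
have [W1 W2 W3] := Im_pivots_gt0 sW.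
have [A1 A2 A3] := pivots_oppV_Wmx_conj HZ.
rewrite !pfun_pivots // A1 A2 A3 !log_h1_oppV // -cexpD.
by congr cexp; ring.
Qed.
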